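(* With the notation of the context (a unital partition $\mathcal{P}$ of $G=\mu_{p^n}$, $p$ odd prime, and the sets $A_{i,k}$, $B_{j,k}$ and integer $u_k$ attached to a fixed $A\in\mathcal{P}_k$ and $y\in A\cap B_k$), if $B_{j,k}\subseteq A_{i,k}$ then $j\equiv i\pmod{u_k}$.
   Context: A unital partition of a finite commutative group $G$ is a partition $G=\{1\}\sqcup A_0\sqcup\dots\sqcup A_s$ such that, with $a_i=\sum_{x\in A_i}x\in\mathbb{Z}[G]$, the $\mathbb{Z}$-span of $1$ and the $a_i$ is closed under multiplication in $\mathbb{Z}[G]$. Fix $\alpha$ an integer generating $(\mathbb{Z}/p^n\mathbb{Z})^\times$. $B_k=\{x^{p^k}\mid x\text{ a generator of }G\}$, $\mathcal{P}_k=\{A\in\mathcal{P}\mid A\cap B_k\neq\emptyset\}$. Fix $A\in\mathcal{P}_k$, $y\in A\cap B_k$; $u_k$ is the smallest positive integer with $y^{\alpha^{u_k}}\in A$, $\beta_k=\alpha^{u_k}$, $r_k+1=\phi(p^{n-k})/u_k$. For $X\subseteq G$, $X^m=\{x^m:x\in X\}$. $A_{i,k}=A^{\alpha^i}$, $B_{0,k}=\{y,y^{\beta_k},\dots,y^{\beta_k^{r_k}}\}$, $B_{i,k}=B_{0,k}^{\alpha^i}$. *)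

From HB Require Import structures.
From mathcomp Require Import all_boot all_order all_algebra all_fingroup all_solvable.
Set Implicit Arguments. Unset Strict Implicit. Unset Printing Implicit Defensive.
Import GRing.Theory.

(* Elements of the group ring Z[G] are represented as functions gT -> int
   (supported in G).  The product in Z[G] is convolution over G. *)
Definition grconv (gT : finGroupType) (G : {set gT}) (f g : gT -> int) : gT -> int :=
  fun z => (\sum_(x in G) f x * g (x^-1 * z)%g)%R.

(* Indicator of a subset, i.e. the group-ring element sum_{x in A} x. *)
Definition grind (gT : finGroupType) (A : {set gT}) : gT -> int :=
  fun z => Posz ((z \in A) : nat).

Definition in_Zspan (gT : finGroupType) (P : {set {set gT}}) (h : gT -> int) : Prop :=
  exists (c0 : int) (c : {set gT} -> int),
    forall z, h z = (c0 * grind [set 1%g] z + \sum_(B in P) c B * grind B z)%R.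

Definition unital_partition (gT : finGroupType) (G : {set gT}) (P : {set {set gT}}) : Prop :=
  partition P (G :\ 1%g) /\
  forall h1 h2, in_Zspan P h1 -> in_Zspan P h2 -> in_Zspan P (grconv G h1 h2).

Definition unit_generator (m alpha : nat) : Prop :=
  coprime alpha m /\ forall x, coprime x m -> exists i, x = alpha ^ i %[mod m].

Definition setpow (gT : finGroupType) (X : {set gT}) (m : nat) : {set gT} :=
  [set (x ^+ m)%g | x in X].

Definition Bset (gT : finGroupType) (G : {set gT}) (p k : nat) : {set gT} :=
  [set (x ^+ (p ^ k))%g | x in G & generator G x].

From HB Require Import structures.
From mathcomp Require Import all_boot all_order all_algebra all_fingroup all_solvable.
Set Implicit Arguments. Unset Strict Implicit. Unset Printing Implicit Defensive.
Import GRing.Theory.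

(* The engine is the multiplier theorem for unital partitions of an abelian
   group G: for t coprime to |G| and blocks C, D of P, if C^t meets D then
   D is contained in C^t.  For a prime q this comes from the Frobenius
   congruence a_C^q = a_{C^q} (mod q) in Z[G]: a_C^q lies in the Z-span of 1
   and the a_B, hence is constant on each block, so its reduction mod q, the
   indicator of C^q, is constant on D.  To reduce mod q in a genuine ring we
   send Z[G] to matrices over F_q through the regular representation.  The
   property then propagates to products of primes, i.e. to every t coprime
   to |G|.
   Applied with t = alpha^u it gives A <= A^(alpha^u); by minimality of u the
   exponents d with y^(alpha^d) in A are exactly the multiples of u.  From
   y^(alpha^j) = x^(alpha^i) with x in A and Euler's theorem we get
   y^(alpha^(j + i(phi - 1))) = x in A, and u divides phi(p^n): so j = i mod u. *)

Local Open Scope ring_scope.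

Lemma frobeniusD_comm (R : pzRingType) (q : nat) (x y : R) :
  prime q -> q%:R = 0 :> R -> GRing.comm x y -> (x + y) ^+ q = x ^+ q + y ^+ q.
Proof.
move=> q_pr q0 cxy; rewrite exprDn_comm // (bigD1 ord0) //= (bigD1 ord_max) //=.
rewrite big1 ?addr0; last first.
  move=> i /andP[i0 iM]; have /dvdnP[m ->] : (q %| 'C(q, i))%N.
    apply: prime_dvd_bin => //; rewrite lt0n; apply/andP; split.
      by apply: contra i0 => /eqP i0; apply/eqP/val_inj.
    rewrite ltn_neqAle -ltnS ltn_ord andbT; apply: contra iM => /eqP iM.
    by apply/eqP/val_inj.
  by rewrite mulrnA -mulr_natr q0 mulr0.
rewrite subn0 expr0 mulr1 bin0 subnn expr0 mul1r binn !mulr1n //.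
by rewrite -(inj_eq val_inj) /= -lt0n prime_gt0.
Qed.

Lemma frobenius_sum_comm (R : pzRingType) (I : eqType) (s : seq I) (F : I -> R)
    (q : nat) :
  prime q -> q%:R = 0 :> R -> {in s &, forall a b, GRing.comm (F a) (F b)} ->
  (\sum_(a <- s) F a) ^+ q = \sum_(a <- s) F a ^+ q.
Proof.
move=> q_pr q0; elim: s => [|a s IHs] cF.
  by rewrite !big_nil expr0n eqn0Ngt prime_gt0.
have cFs : {in s &, forall b c, GRing.comm (F b) (F c)}.
  by move=> b c bs cs; apply: cF; rewrite inE ?bs ?cs orbT.
rewrite !big_cons frobeniusD_comm ?IHs // big_seq.
by apply: commr_sum => b bs; apply: cF; rewrite inE ?eqxx ?bs ?orbT.
Qed.

Section RegularRepresentation.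

Variables (gT : finGroupType) (G : {group gT}) (q : nat).

Definition regmx (f : gT -> int) : 'M['F_q]_#|gT| :=
  \matrix_(i, j) (f ((enum_val i)^-1 * enum_val j)%g)%:~R.

Definition supported (f : gT -> int) : Prop := forall x, x \notin G -> f x = 0.

Lemma regmx_eq (f g : gT -> int) : f =1 g -> regmx f = regmx g.
Proof. by move=> fg; apply/matrixP=> i j; rewrite !mxE fg. Qed.

Lemma regmx_conv (f g : gT -> int) :
  supported f -> regmx (grconv G f g) = regmx f *m regmx g.
Proof.
move=> fG; apply/matrixP=> i j; rewrite !mxE /grconv rmorph_sum /=.
set a := enum_val i; set b := enum_val j.
under [RHS]eq_bigr do rewrite !mxE.
rewrite -(big_enum_val (A := predT)
  (fun k => (f (a^-1 * k)%g)%:~R * (g (k^-1 * b)%g)%:~R)) /=.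
rewrite [RHS](reindex_inj (mulgI a)) /= [RHS](bigID (mem G)) /=.
rewrite [X in _ + X]big1 ?addr0; last first.
  by move=> x /fG; rewrite mulKg => ->; rewrite mul0r.
by apply: eq_bigr => x _; rewrite mulKg invMg -mulgA intrM.
Qed.

Lemma regmx_unit : regmx (grind [set 1%g]) = 1.
Proof.
apply/matrixP=> i j; rewrite !mxE /grind in_set1 -eq_mulVg1 (inj_eq enum_val_inj).
by case: (i == j).
Qed.

Lemma grind_supported (C : {set gT}) : C \subset G -> supported (grind C).
Proof.
move=> CG x xG; rewrite /grind; case: (boolP (x \in C)) => // /(subsetP CG).
by rewrite (negbTE xG).
Qed.

Definition pointmx (x : gT) : 'M['F_q]_#|gT| := regmx (grind [set x]).

Lemma pointmx_coef (x : gT) (z : gT) :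
  pointmx x (enum_rank 1%g) (enum_rank z) = ((z == x) : nat)%:R.
Proof. by rewrite !mxE !enum_rankK invg1 mul1g /grind in_set1. Qed.

Lemma pointmxM (x y : gT) : x \in G -> pointmx x * pointmx y = pointmx (x * y).
Proof.
move=> xG; rewrite /pointmx -mulmxE -regmx_conv; last first.
  by apply: grind_supported; rewrite sub1set.
apply: regmx_eq => z; rewrite /grconv (bigD1 x) //= big1 ?addr0; last first.
  by move=> w /andP[_ /negbTE]; rewrite /grind in_set1 => ->; rewrite mul0r.
rewrite /grind !in_set1 eqxx mul1r; congr (Posz (nat_of_bool _)).
by apply/eqP/eqP=> [<-|->]; rewrite ?mulKVg ?mulKg.
Qed.

Lemma pointmxX (x : gT) (r : nat) : x \in G -> pointmx x ^+ r = pointmx (x ^+ r).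
Proof.
move=> xG; elim: r => [|r IHr]; first by rewrite expr0 expg0 /pointmx regmx_unit.
by rewrite exprSr IHr (pointmxM _ (groupX r xG)) expgSr.
Qed.

Lemma regmx_grind (C : {set gT}) : regmx (grind C) = \sum_(x in C) pointmx x.
Proof.
apply/matrixP=> i j; rewrite summxE !mxE /grind.
set w := ((enum_val i)^-1 * enum_val j)%g.
under eq_bigr do rewrite /pointmx mxE /grind in_set1 -/w.
case: (boolP (w \in C)) => wC.
  rewrite (bigD1 w) //= eqxx big1 ?addr0 // => x /andP[_ /negbTE].
  by rewrite eq_sym => ->.
by rewrite big1 // => x xC; case: eqP => // ew; rewrite ew xC in wC.
Qed.

Lemma regmx_char : prime q -> q%:R = 0 :> 'M['F_q]_#|gT|.
Proof.
move=> q_pr; apply/matrixP=> i j; rewrite mulmxnE !mxE.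
by rewrite -mulr_natr pchar_Fp_0 // mulr0.
Qed.

Fixpoint grexp (h : gT -> int) (r : nat) : gT -> int :=
  if r is r'.+1 then grconv G (grexp h r') h else grind [set 1%g].

Lemma grexp_supported (h : gT -> int) (r : nat) :
  supported h -> supported (grexp h r).
Proof.
move=> hG; case: r => [|r] x xG /=.
  by apply: (grind_supported _ xG); rewrite sub1set group1.
by rewrite /grconv big1 // => w wG; rewrite hG ?mulr0 // groupMl ?groupV.
Qed.

Lemma regmx_grexp (h : gT -> int) (r : nat) :
  supported h -> regmx (grexp h r) = regmx h ^+ r.
Proof.
move=> hG; elim: r => [|r IHr]; first by rewrite expr0 /= regmx_unit.
by rewrite /= regmx_conv ?IHr ?exprSr ?mulmxE //; apply: grexp_supported.
Qed.

Lemma grexp_frobenius (C : {set gT}) :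
  prime q -> abelian G -> coprime #|G| q -> C \subset G ->
  forall z, (grexp (grind C) q z)%:~R = ((z \in setpow C q) : nat)%:R :> 'F_q.
Proof.
move=> q_pr abG cGq CG z.
have injq : {in G &, injective (fun x => x ^+ q)%g}.
  exact: can_in_inj (expgK cGq).
have := regmx_grexp q (grind_supported CG).
rewrite regmx_grind -big_enum frobenius_sum_comm ?regmx_char //; last first.
  move=> a b; rewrite !mem_enum => /(subsetP CG) aG /(subsetP CG) bG.
  by rewrite /GRing.comm !pointmxM // (centsP abG).
move=> /matrixP /(_ (enum_rank 1%g) (enum_rank z)).
rewrite summxE !mxE !enum_rankK invg1 mul1g => ->; rewrite big_enum /=.
rewrite (eq_bigr (fun x => ((z == x ^+ q)%g : nat)%:R)); last first.
  by move=> x /(subsetP CG) xG; rewrite pointmxX // pointmx_coef.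
case: (boolP (z \in setpow C q)) => [/imsetP[x0 x0C ->]|zCq].
  rewrite (bigD1 x0) //= eqxx big1 ?addr0 // => x /andP[xC nx].
  case: eqP => // /(injq _ _ (subsetP CG _ x0C) (subsetP CG _ xC)) e.
  by rewrite e eqxx in nx.
rewrite big1 // => x xC; case: eqP => // ez.
by move: zCq; rewrite ez (imset_f (fun y => (y ^+ q)%g)).
Qed.

End RegularRepresentation.

Section UnitalPartition.

Variables (gT : finGroupType) (G : {group gT}) (P : {set {set gT}}).

Lemma block_sub (C : {set gT}) :
  partition P (G :\ 1%g) -> C \in P -> C \subset G :\ 1%g.
Proof. by move=> pP CP; rewrite -(cover_partition pP); apply: bigcup_sup. Qed.

Lemma Zspan_const_on_block (h : gT -> int) (D : {set gT}) (z w : gT) :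
  partition P (G :\ 1%g) -> in_Zspan P h -> D \in P -> z \in D -> w \in D ->
  h z = h w.
Proof.
move=> pP [c0 [c hE]] DP zD wD.
have tP : trivIset P by case/and3P: pP.
suff hD x : x \in D -> h x = c D by rewrite !hD.
move=> xD; rewrite hE /grind in_set1.
have /setD1P[/negbTE -> _] := subsetP (block_sub pP DP) x xD.
rewrite mulr0 add0r (bigD1 D) //= xD mulr1 big1 ?addr0 // => B /andP[BP nBD].
case: (boolP (x \in B)) => xB; last by rewrite mulr0.
by move: nBD; rewrite -(def_pblock tP BP xB) (def_pblock tP DP xD) eqxx.
Qed.

Lemma grexp_in_Zspan (C : {set gT}) (r : nat) :
  unital_partition G P -> C \in P -> in_Zspan P (grexp G (grind C) r).
Proof.
move=> [pP mulP] CP; elim: r => [|r IHr] /=.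
  exists 1, (fun _ => 0) => z.
  by rewrite mul1r big1 ?addr0 // => B _; rewrite mul0r.
apply: mulP => //; exists 0, (fun B => ((B == C) : nat)%:~R) => z.
rewrite mul0r add0r (bigD1 C) //= eqxx mul1r big1 ?addr0 //.
by move=> B /andP[_ /negbTE ->]; rewrite mul0r.
Qed.

Definition multiplier (t : nat) : Prop :=
  forall C D z, C \in P -> D \in P -> z \in setpow C t -> z \in D ->
  D \subset setpow C t.

(* Primes not dividing |G| are multipliers (Frobenius congruence). *)
Lemma multiplier_prime (q : nat) :
  unital_partition G P -> abelian G -> prime q -> coprime #|G| q ->
  multiplier q.
Proof.
move=> uP abG q_pr cGq C D z CP DP zCq zD; have pP := uP.1.
have CG : C \subset G by apply: subset_trans (block_sub pP CP) (subsetDl _ _).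
apply/subsetP => w wD.
have := Zspan_const_on_block pP (grexp_in_Zspan q uP CP) DP zD wD.
move=> /(congr1 (fun m : int => m%:~R : 'F_q)).
rewrite !grexp_frobenius // zCq.
by case: (w \in _) => //= /esym/eqP; rewrite oner_eq0.
Qed.

Lemma multiplier1 : partition P (G :\ 1%g) -> multiplier 1.
Proof.
move=> pP C D z CP DP /imsetP[c cC ->] zD; rewrite expg1 in zD.
have tP : trivIset P by case/and3P: pP.
rewrite -(def_pblock tP DP zD) (def_pblock tP CP cC).
by apply/subsetP => x xC; apply/imsetP; exists x; rewrite ?expg1.
Qed.

Lemma setpowM (C : {set gT}) (a b : nat) :
  setpow (setpow C a) b = setpow C (a * b).
Proof. by rewrite /setpow -imset_comp; apply: eq_imset => x /=; rewrite expgM. Qed.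

(* Multipliers are closed under products (the first factor coprime to |G|
   so that C^a avoids the unit and meets a block): (C^a)^b contains E^b for
   the block E through any point of C^a. *)
Lemma multiplierM (a b : nat) :
  partition P (G :\ 1%g) -> coprime #|G| a -> multiplier a -> multiplier b ->
  multiplier (a * b).
Proof.
move=> pP cGa Ma Mb C D z CP DP; rewrite -setpowM => /imsetP[w wCa ->] zD.
have wG1 : w \in G :\ 1%g.
  case/imsetP: wCa => c cC ->.
  have /setD1P[c1 cG] := subsetP (block_sub pP CP) c cC.
  apply/setD1P; split; last exact: groupX.
  by apply: contra c1 => /eqP ca1; rewrite -(expgK cGa cG) ca1 expg1n.
have wcov : w \in cover P by rewrite (cover_partition pP).
set E := pblock P w; have EP : E \in P by apply: pblock_mem.
have ECa : E \subset setpow C a by apply: (Ma C E w) => //; rewrite mem_pblock.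
apply: subset_trans (imsetS _ ECa).
by apply: (Mb E D _ EP DP _ zD); apply: imset_f; rewrite mem_pblock.
Qed.

Lemma multiplier_coprime (t : nat) :
  unital_partition G P -> abelian G -> (0 < t)%N -> coprime #|G| t ->
  multiplier t.
Proof.
move=> uP abG; elim/ltn_ind: t => t IHt t_gt0 cGt.
have [t_le1|t_gt1] := leqP t 1.
  have -> : t = 1%N by apply/eqP; rewrite eqn_leq t_le1 t_gt0.
  exact: multiplier1 uP.1.
have q_pr := pdiv_prime t_gt1; have qt := pdiv_dvd t.
have cGq : coprime #|G| (pdiv t) by apply: coprime_dvdr cGt.
rewrite -(divnK qt) mulnC.
apply: (multiplierM uP.1 cGq (multiplier_prime uP abG q_pr cGq)).
apply: IHt; first exact: ltn_Pdiv (prime_gt1 q_pr) t_gt0.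
  by rewrite divn_gt0 ?prime_gt0 // dvdn_leq.
by apply: coprime_dvdr cGt; apply: dvdn_div.
Qed.

End UnitalPartition.

Local Open Scope nat_scope.

Lemma expg_totient_fix (gT : finGroupType) (x : gT) (N a e : nat) :
  #[x]%g %| N -> coprime a N -> (x ^+ (a ^ (totient N * e)))%g = x.
Proof.
move=> oxN caN; apply/eqP; rewrite -{2}(expg1 x) eq_expg_mod_order.
have aN1 : a ^ (totient N * e) = 1 %[mod N].
  by rewrite expnM -modnXm Euler_exp_totient // modnXm exp1n.
by rewrite -(modn_dvdm _ oxN) aN1 modn_dvdm.
Qed.

Lemma Bset_order (gT : finGroupType) (G : {group gT}) (p n k : nat) (y : gT) :
  #|G| = p ^ n -> y \in Bset G p k -> #[y]%g %| p ^ (n - k).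
Proof.
move=> oG /imsetP[x]; rewrite inE => /andP[xG _] ->.
rewrite order_dvdn -expgM -expnD; apply/eqP; apply/eqP; rewrite -order_dvdn.
by apply: dvdn_trans (order_dvdG xG) _; rewrite oG dvdn_exp2l // -leq_subLR.
Qed.

Section PowerOrbit.

Variables (gT : finGroupType) (G : {group gT}) (A : {set gT}) (y : gT) (a u : nat).
Hypotheses (AG : A \subset G) (cGa : coprime #|G| a) (u_gt0 : 0 < u).
Hypotheses (A_sub_Au : A \subset setpow A (a ^ u)) (yA : y \in A).
Hypothesis u_min : forall m, 0 < m < u -> (y ^+ (a ^ m))%g \notin A.

(* Taking (a^u)-th roots inside A lowers the exponent d by u. *)
Lemma orbit_step (d : nat) :
  u <= d -> (y ^+ (a ^ d))%g \in A -> (y ^+ (a ^ (d - u)))%g \in A.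
Proof.
move=> ud /(subsetP A_sub_Au) /imsetP[w wA yd_w].
have cGau : coprime #|G| (a ^ u) by apply: coprimeXr.
have yG : y \in G := subsetP AG y yA.
suff -> : (y ^+ (a ^ (d - u)))%g = w by [].
apply: (can_in_inj (expgK cGau)); rewrite ?groupX ?(subsetP AG) //=.
by rewrite -yd_w -expgM -expnD subnK.
Qed.

(* Reducing d modulo u and invoking minimality of u. *)
Lemma orbit_exponent_dvd (d : nat) : (y ^+ (a ^ d))%g \in A -> u %| d.
Proof.
move=> yd; have yr : (y ^+ (a ^ (d %% u)))%g \in A.
  move: yd; rewrite {1}(divn_eq d u); elim: (d %/ u) => [|m IHm].
    by rewrite mul0n add0n.
  move=> /orbit_step; rewrite mulSn -addnA leq_addr addKn => /(_ isT).
  exact: IHm.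
rewrite /dvdn; apply/eqP; case: (posnP (d %% u)) => // r_gt0.
by move: (@u_min (d %% u)); rewrite r_gt0 ltn_pmod // yr => /(_ isT).
Qed.

(* Euler's theorem bounds the period: u divides phi(N) when #[y] divides N. *)
Lemma orbit_period_dvd_totient (N : nat) :
  #[y]%g %| N -> coprime a N -> u %| totient N.
Proof.
move=> oyN caN; apply: orbit_exponent_dvd.
by rewrite -[totient N]muln1 expg_totient_fix.
Qed.

(* If y^(a^j) = x^(a^i) with x in A, then raising to a^(i(phi(N) - 1)) brings
   y^(a^j) back to x, so u divides j + i(phi(N) - 1). *)
Lemma orbit_root_exponent (x : gT) (N i j : nat) :
  0 < N -> x \in A -> #[x]%g %| N -> coprime a N ->
  (y ^+ (a ^ j))%g = (x ^+ (a ^ i))%g -> u %| j + i * (totient N).-1.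
Proof.
move=> N_gt0 xA oxN caN yj_xi; apply: orbit_exponent_dvd.
rewrite expnD expgM yj_xi -expgM -expnD.
by rewrite -{1}(muln1 i) -mulnDr add1n prednK ?totient_gt0 // mulnC expg_totient_fix.
Qed.

End PowerOrbit.

Lemma congr_of_dvd (m u i j : nat) :
  0 < m -> u %| m -> u %| j + i * m.-1 -> j = i %[mod u].
Proof.
move=> m_gt0 um uji.
have split_sum : j + i * m = i + (j + i * m.-1).
  by rewrite -{1}(prednK m_gt0) mulnS addnCA.
have jmod : (j + i * m) %% u = j %% u.
  by case/dvdnP: um => c ->; rewrite mulnA addnC modnMDl.
have imod : (i + (j + i * m.-1)) %% u = i %% u.
  by case/dvdnP: uji => c ->; rewrite addnC modnMDl.
by rewrite -jmod split_sum imod.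
Qed.

Lemma mem_power_orbit (gT : finGroupType) (y : gT) (b N : nat) :
  0 < N -> y \in [set (y ^+ (b ^ m))%g | m : 'I_N].
Proof. by move=> N_gt0; apply/imsetP; exists (Ordinal N_gt0); rewrite //= expg1. Qed.

Lemma coprime_exponent_gt0 (gT : finGroupType) (G : {group gT}) (x : gT) (a : nat) :
  x \in G -> x != 1%g -> coprime #|G| a -> 0 < a.
Proof.
move=> xG x1; rewrite lt0n; apply: contraTneq => ->; rewrite /coprime gcdn0.
by apply: contra x1 => /eqP oG1; rewrite -order_eq1 -dvdn1 -oG1 order_dvdG.
Qed.

Theorem lemma3p8 (gT : finGroupType) (G : {group gT}) (p n : nat)
  (P : {set {set gT}}) (alpha k u : nat) (A : {set gT}) (y : gT) (i j : nat) :
  prime p -> odd p ->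
  cyclic G -> #|G| = p ^ n ->
  unital_partition G P ->
  unit_generator (p ^ n) alpha ->
  A \in P -> y \in A :&: Bset G p k ->
  0 < u -> (y ^+ (alpha ^ u))%g \in A ->
  (forall m, 0 < m < u -> (y ^+ (alpha ^ m))%g \notin A) ->
  let beta := alpha ^ u in
  let B0 := [set (y ^+ (beta ^ m))%g | m : 'I_(totient (p ^ (n - k)) %/ u)] in
  setpow B0 (alpha ^ j) \subset setpow A (alpha ^ i) ->
  j = i %[mod u].
Proof.
move=> p_pr _ cycG oG uP [c_alpha _] AP /setIP[yA yBk] u_gt0 yAu u_min beta B0.
move=> B0j_sub_Ai.
have A_sub := block_sub uP.1 AP.
have AG : A \subset G := subset_trans A_sub (subsetDl _ _).
have ordG x : x \in G -> #[x]%g %| p ^ n by rewrite -oG; apply: order_dvdG.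
have cGalpha : coprime #|G| alpha by rewrite oG coprime_sym.
have /setD1P[y1 yG] := subsetP A_sub y yA.
have alpha_u_gt0 : 0 < alpha ^ u.
  by rewrite expn_gt0 (coprime_exponent_gt0 yG y1 cGalpha).
have A_sub_Au : A \subset setpow A (alpha ^ u).
  have mult_u := multiplier_coprime uP (cyclic_abelian cycG) alpha_u_gt0
    (coprimeXr u cGalpha).
  exact: (mult_u A A _ AP AP (imset_f _ yA) yAu).
have u_phi := orbit_period_dvd_totient AG cGalpha u_gt0 A_sub_Au yA u_min.
have yB0 : y \in B0.
  have u_phik : u %| totient (p ^ (n - k)).
    apply: u_phi; first exact: Bset_order oG yBk.
    by apply: coprime_dvdr c_alpha; apply/dvdn_exp2l/leq_subr.
  apply: mem_power_orbit.
  by rewrite divn_gt0 // dvdn_leq // totient_gt0 expn_gt0 prime_gt0.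
have /(subsetP B0j_sub_Ai) /imsetP[x xA yj_xi] :=
  imset_f (fun z => (z ^+ (alpha ^ j))%g) yB0.
have pn_gt0 : 0 < p ^ n by rewrite expn_gt0 prime_gt0.
apply: (congr_of_dvd _ (u_phi _ (ordG y yG) c_alpha)); first by rewrite totient_gt0.
apply: (orbit_root_exponent AG cGalpha u_gt0 A_sub_Au yA u_min pn_gt0 xA) => //.
exact/ordG/(subsetP AG).
Qed.
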